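(* Let $K(1,3)$ be the Kolakoski sequence over $\{1,3\}$ and let $B_n$ ($n\ge1$) be as defined in the context. Then for all $n\ge 1$: (i) $B_n$ is the prefix of $K(1,3)$ of length $|B_n|$; (ii) $B_{n+1}=\mathcal{G}(R(B_n),1)$. Consequently $K(1,3)=\lim_{n\to\infty}B_n$.
   Context: $K(1,3)$ is the unique infinite sequence over the alphabet $\{1,3\}$ beginning with $1$ that equals its own run-length encoding, i.e. the sequence of lengths of its maximal runs of equal symbols is the sequence itself ($K(1,3)=1\,3\,3\,3\,1\,1\,1\,3\,3\,3\,1\,3\dots$). Generation operator: for a finite vector $R=\langle r_1,\dots,r_m\rangle$ of positive integers and $s\in\{1,3\}$, $\mathcal{G}(R,s)= s^{r_1}\,(4-s)^{r_2}\,s^{r_3}\cdots$ (the $i$-th run consists of $r_i$ copies of $s$ if $i$ is odd and of $4-s$ if $i$ is even), of length $\sum_i r_i$. For a finite word $W$ over $\{1,3\}$, $R(W)$ denotes $W$ itself regarded as a vector of positive integers. Define $B_1=\mathcal{G}(\langle 1,3,3,3,1\rangle,1)=1\,3\,3\,3\,1\,1\,1\,3\,3\,3\,1$, $P_1=3$, and for $n\ge1$: $B_{n+1}=B_n\,P_n\,B_n$ (concatenation), $P_{n+1}=\mathcal{G}(R(P_n),3)$. The limit $\lim B_n$ is meaningful since each $B_n$ is a prefix of $B_{n+1}$. *)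

From mathcomp Require Import all_boot.
Set Implicit Arguments. Unset Strict Implicit. Unset Printing Implicit Defensive.

(* Infinite sequences over nat are functions nat -> nat (0-indexed). *)

(* start position of the i-th maximal run (0-indexed) when the run lengths
   are given by k itself: s_i = k 0 + ... + k (i-1). *)
Definition run_start (k : nat -> nat) (i : nat) : nat := \sum_(j < i) k j.

(* k is K(1,3): over {1,3}, begins with 1, and its sequence of maximal run
   lengths is k itself, i.e. the i-th maximal run occupies positions
   [run_start k i, run_start k (i+1)) (of length k i), is constant there, and
   the next run carries a different symbol (maximality). *)
Definition is_K13 (k : nat -> nat) : Prop :=
  [/\ forall p, k p = 1 \/ k p = 3,
      k 0 = 1 &
      forall i,
        (forall p, run_start k i <= p < run_start k i.+1 -> k p = k (run_start k i))
        /\ k (run_start k i.+1) <> k (run_start k i)].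

(* Generation operator G(R, s): runs r_1, r_2, ... alternating s, 4-s, s, ... *)
Fixpoint gen (R : seq nat) (s : nat) : seq nat :=
  match R with
  | [::] => [::]
  | r :: R' => nseq r s ++ gen R' (4 - s)
  end.

(* BP n = (B_{n+1}, P_{n+1}). *)
Fixpoint BP (n : nat) : seq nat * seq nat :=
  match n with
  | 0 => (gen [:: 1; 3; 3; 3; 1] 1, [:: 3])
  | n'.+1 => let (b, p) := BP n' in (b ++ p ++ b, gen p 3)
  end.

(* B n = B_n for n >= 1 (B 0 is a junk value equal to B_1). *)
Definition B (n : nat) : seq nat := (BP n.-1).1.
Definition P (n : nat) : seq nat := (BP n.-1).2.

From mathcomp Require Import all_boot.
From mathcomp Require Import zify.

(* Since the generation operator alternates the two symbols, G(X ++ Y, s)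
   is G(X, s) followed by G(Y, s') where s' depends only on the parity of
   |X|.  Every B_n and P_n has odd length and P_n consists of odd letters,
   so G(B_n P_n B_n, 1) = G(B_n, 1) G(P_n, 3) G(B_n, 1) = B_{n+1} P_{n+1}
   B_{n+1}, which gives (ii) by induction.  Because K(1,3) is its own
   run-length encoding, G(w, 1) is a prefix of K(1,3) whenever w is; as
   B_1 = G(1 3 3 3 1, 1) and 1 3 3 3 1 is a prefix of G(G(1 3, 1), 1), this
   gives (i).  Finally |B_n| grows without bound. *)

Lemma size_gen R s : size (gen R s) = sumn R.
Proof. by elim: R s => [|r R IH] s //=; rewrite size_cat size_nseq IH. Qed.

Lemma gen_cat X Y s : s <= 4 ->
  gen (X ++ Y) s = gen X s ++ gen Y (if odd (size X) then 4 - s else s).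
Proof.
elim: X s => [|x X IH] s s_le4 //=.
rewrite IH; last lia.
rewrite -catA; congr (_ ++ (_ ++ _)).
by case: (odd (size X)) => //=; congr gen; lia.
Qed.

Lemma all_odd_gen R s : odd s -> s <= 4 -> all odd (gen R s).
Proof.
elim: R s => [|r R IH] s odd_s s_le4 //=.
rewrite all_cat IH; [|by rewrite oddB // odd_s | lia].
by rewrite andbT; apply/allP => x /nseqP [-> _].
Qed.

Lemma odd_sumn (p : seq nat) : all odd p -> odd (sumn p) = odd (size p).
Proof.
by elim: p => [|x p IH] //= /andP [odd_x /IH odd_sum]; rewrite oddD odd_x odd_sum.
Qed.

Lemma B_rec n : B n.+2 = B n.+1 ++ P n.+1 ++ B n.+1.
Proof. by rewrite /B /P /=; case: (BP n). Qed.

Lemma P_rec n : P n.+2 = gen (P n.+1) 3.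
Proof. by rewrite /P /=; case: (BP n). Qed.

Lemma odd_P n : all odd (P n.+1) && odd (size (P n.+1)).
Proof.
elim: n => [|n /andP [oddP odd_sizeP]] //.
by rewrite P_rec all_odd_gen // size_gen odd_sumn.
Qed.

Lemma odd_size_B n : odd (size (B n.+1)).
Proof.
elim: n => [|n IH] //.
have /andP [_ odd_sizeP] := odd_P n.
by rewrite B_rec !size_cat !oddD IH odd_sizeP.
Qed.

Lemma gen_B n : gen (B n.+1) 1 = B n.+2.
Proof.
elim: n => [|n IH] //.
have /andP [_ odd_sizeP] := odd_P n.
rewrite B_rec gen_cat // odd_size_B gen_cat // odd_sizeP /=.
by rewrite IH (B_rec n.+1) P_rec.
Qed.

Lemma size_B n : n < size (B n.+1).
Proof. by elim: n => [|n IH] //; rewrite B_rec !size_cat; lia. Qed.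

Definition prefix_of (k : nat -> nat) (w : seq nat) : Prop :=
  forall i, i < size w -> nth 0 w i = k i.

Lemma prefix_ofE k w : prefix_of k w -> w = mkseq k (size w).
Proof.
move=> w_pref; apply: (@eq_from_nth _ 0); first by rewrite size_mkseq.
by move=> i lt_i; rewrite nth_mkseq // w_pref.
Qed.

Lemma prefix_of_take k w m : prefix_of k w -> prefix_of k (take m w).
Proof.
move=> w_pref i; rewrite size_take.
by case: (ltnP m (size w)) => lt_mw lt_i; rewrite nth_take ?w_pref //; lia.
Qed.

Section SelfGeneration.

Variable k : nat -> nat.
Hypothesis k_13 : forall p, k p = 1 \/ k p = 3.
Hypothesis k0 : k 0 = 1.
Hypothesis k_runs : forall i,
  (forall p, run_start k i <= p < run_start k i.+1 -> k p = k (run_start k i))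
  /\ k (run_start k i.+1) <> k (run_start k i).

Lemma run_startS i : run_start k i.+1 = run_start k i + k i.
Proof. by rewrite /run_start big_ord_recr. Qed.

Lemma k_run_start i : k (run_start k i) = if odd i then 3 else 1.
Proof.
elim: i => [|i IH]; first by rewrite /run_start big_ord0.
have [_ next_neq] := k_runs i.
rewrite /=; case: (odd i) IH next_neq => /= IH;
  by case: (k_13 (run_start k i.+1)); lia.
Qed.

Lemma run_nseq i :
  map k (iota (run_start k i) (k i)) = nseq (k i) (if odd i then 3 else 1).
Proof.
rewrite -[in nseq _ _](size_iota (run_start k i) (k i)) -(size_map k).
apply/all_pred1P; rewrite all_map; apply/allP => p /=.
rewrite mem_iota -run_startS -k_run_start => in_run.
by apply/eqP; apply: (proj1 (k_runs i)).
Qed.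

Lemma gen_mkseq m : gen (mkseq k m) 1 = mkseq k (run_start k m).
Proof.
elim: m => [|m IH]; first by rewrite /run_start big_ord0.
rewrite mkseqS -cats1 gen_cat // size_mkseq IH /= cats0.
rewrite run_startS /mkseq iotaD map_cat run_nseq.
by case: (odd m).
Qed.

Lemma prefix_of_gen w : prefix_of k w -> prefix_of k (gen w 1).
Proof.
move=> /prefix_ofE ->; rewrite gen_mkseq => i.
by rewrite size_mkseq => lt_i; rewrite nth_mkseq.
Qed.

Lemma prefix_of_13 : prefix_of k [:: 1; 3].
Proof.
have [_ k1_neq] := k_runs 0.
move: k1_neq; rewrite /run_start big_ord1 big_ord0 k0 => k1_neq.
by case=> [|[|i]] //= _; case: (k_13 1) k1_neq.
Qed.

Lemma prefix_of_B n : prefix_of k (B n.+1).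
Proof.
elim: n => [|n IH]; last by rewrite -gen_B; apply: prefix_of_gen.
have -> : B 1 = gen (take 5 (gen (gen [:: 1; 3] 1) 1)) 1 by [].
by apply/prefix_of_gen/prefix_of_take/prefix_of_gen/prefix_of_gen/prefix_of_13.
Qed.

End SelfGeneration.

Theorem theorem4p1 (k : nat -> nat) :
  is_K13 k ->
  (forall n, 1 <= n ->
     (forall i, i < size (B n) -> nth 0 (B n) i = k i)
     /\ B n.+1 = gen (B n) 1)
  /\ (forall i, exists N, forall n, N <= n ->
        i < size (B n) /\ nth 0 (B n) i = k i).
Proof.
move=> [k_13 k0 k_runs]; split.
  by case=> [|n] // _; split; [exact: prefix_of_B | rewrite gen_B].
move=> i; exists i.+1; case=> [|n] // le_in.
have lt_i : i < size (B n.+1) by have := size_B n; lia.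
by split; last exact: prefix_of_B.
Qed.
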